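(* For every complex $z$, \[ \cosh(\pi z)=\sum_{n\ge0}\frac{\prod_{j=0}^{n-1}(j^2+9z^2)}{(2n)!}, \] and, equivalently via Euler's transformation, $\cosh(\pi z)$ equals the continued fraction with $a(0)=1$, $a(1)=2$, $a(n)=5n^2-4n+1+9z^2$ for $n\ge2$, $b(0)=9z^2$, $b(n)=-2n(2n-1)(n^2+9z^2)$ for $n\ge1$.
   Context: For sequences $a(n),b(n)$, the continued fraction is $a(0)+\cfrac{b(0)}{a(1)+\cfrac{b(1)}{a(2)+\cdots}}$; the empty product equals $1$. *)

From Stdlib Require Import Reals Factorial.
From Coquelicot Require Export Coquelicot.
Open Scope C_scope.

Definition Cexp (w : C) : C :=
  (exp (Re w) * cos (Im w), exp (Re w) * sin (Im w))%R.

Definition Ccosh (w : C) : C := (Cexp w + Cexp (- w)) / 2.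

Fixpoint prod_term (z : C) (n : nat) : C :=
  match n with
  | O => 1
  | S m => prod_term z m * (RtoC (INR m) ^ 2 + 9 * z ^ 2)
  end.

(* Fundamental recurrence U_{m+2} = a(m+2) U_{m+1} + b(m+1) U_m,
   returning the pair (U_n, U_{n+1}) from initial (U_0, U_1). *)
Fixpoint cf_pair (a b : nat -> C) (u0 u1 : C) (n : nat) : C * C :=
  match n with
  | O => (u0, u1)
  | S m => let (x, y) := cf_pair a b u0 u1 m in
           (y, a (m + 2)%nat * y + b (m + 1)%nat * x)
  end.

(* Numerators P_n and denominators Q_n of the convergents of
   a(0) + b(0)/(a(1) + b(1)/(a(2) + ...)), with P_{-1}=1, Q_{-1}=0. *)
Definition cf_num (a b : nat -> C) (n : nat) : C :=
  fst (cf_pair a b (a 0%nat) (a 1%nat * a 0%nat + b 0%nat) n).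
Definition cf_den (a b : nat -> C) (n : nat) : C :=
  fst (cf_pair a b 1 (a 1%nat) n).

(* n-th convergent P_n / Q_n = a(0) + b(0)/(a(1) + ... + b(n-1)/a(n)). *)
Definition cf_convergent (a b : nat -> C) (n : nat) : C :=
  cf_num a b n / cf_den a b n.

Definition cf_value (a b : nat -> C) (v : C) : Prop :=
  filterlim (cf_convergent a b) eventually (locally v).

Definition cf_a (z : C) (n : nat) : C :=
  match n with
  | O => 1
  | 1%nat => 2
  | _ => RtoC (5 * INR n ^ 2 - 4 * INR n + 1) + 9 * z ^ 2
  end.

Definition cf_b (z : C) (n : nat) : C :=
  match n with
  | O => 9 * z ^ 2
  | _ => RtoC (- 2 * INR n * (2 * INR n - 1)) * (RtoC (INR n ^ 2) + 9 * z ^ 2)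
  end.

From Stdlib Require Import Reals Lra Psatz Lia Factorial.
From Coquelicot Require Import Coquelicot.
Open Scope C_scope.

(* With [s = (6 z)^2], the [n]-th term of the series is [h_n(s) / 4^n], where
   [h_n(s) = prod_(j<n) (4 j^2 + s) / (2n)!].  The power series
   [F(y) = sum h_n(s) y^n] has radius at least 1 and satisfies
   [4 y (1 - y) F'' + 2 (1 - 2 y) F' = s F]; hence [G(t) = F(sin(t)^2)] solves
   [G'' = s G], [G(0) = 1], [G'(0) = 0] on [|t| < 1], so [G(t) = cosh(6 z t)]
   by uniqueness, and [t = pi/6] gives the series.  The convergents of the
   continued fraction are its partial sums: [(2n)!] times the [n]-th partial
   sum and [(2n)!] both satisfy the three-term recurrence of the fraction. *)

Lemma RtoC_neq0 (x : R) : x <> 0%R -> RtoC x <> 0.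
Proof. intros Hx E. apply Hx. now injection E. Qed.

Lemma cf_pair_recurrence (a b U : nat -> C) :
  (forall m, U (S (S m)) = a (S (S m)) * U (S m) + b (S m) * U m) ->
  forall n, cf_pair a b (U 0%nat) (U 1%nat) n = (U n, U (S n)).
Proof.
  intros HU n; induction n as [|m IH]; simpl; auto.
  rewrite IH, Nat.add_comm, (Nat.add_comm m 1). simpl. now rewrite HU.
Qed.

Definition fact_double_ratio (m : nat) : R := ((2 * INR m + 2) * (2 * INR m + 1))%R.

Lemma fact_double_ratio_pos m : (0 < fact_double_ratio m)%R.
Proof. unfold fact_double_ratio. pose proof (pos_INR m). nra. Qed.

Lemma INR_fact_double_S n :
  INR (fact (2 * S n)) = (fact_double_ratio n * INR (fact (2 * n)))%R.
Proof.
  replace (2 * S n)%nat with (S (S (2 * n))) by lia.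
  unfold fact_double_ratio. rewrite !fact_simpl, !mult_INR, !S_INR, mult_INR.
  simpl. ring.
Qed.

Definition cosh_term (z : C) (n : nat) : C :=
  prod_term z n / RtoC (INR (fact (2 * n))).

Definition cosh_cf_den (n : nat) : C := RtoC (INR (fact (2 * n))).

(* [(2n)!] times the [n]-th partial sum of the series; in this recursive form
   the three-term recurrence below is a ring identity. *)
Fixpoint cosh_cf_num (z : C) (n : nat) : C :=
  match n with
  | O => 1
  | S m => RtoC (fact_double_ratio m) * cosh_cf_num z m + prod_term z (S m)
  end.

Lemma cosh_cf_num_partial_sum z n :
  cosh_cf_num z n = cosh_cf_den n * sum_n (cosh_term z) n.
Proof.
  unfold cosh_cf_den, cosh_term.
  induction n as [|n IH].
  - rewrite sum_O. simpl. field.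
  - rewrite sum_Sn. change plus with Cplus. cbn [cosh_cf_num prod_term].
    rewrite IH, INR_fact_double_S, !RtoC_mult.
    pose proof (fact_double_ratio_pos n).
    field. split; apply RtoC_neq0; [apply INR_fact_neq_0 | lra].
Qed.

Ltac push_RtoC :=
  repeat rewrite ?RtoC_mult, ?RtoC_plus, ?RtoC_minus, ?RtoC_pow, ?RtoC_opp.

Lemma cosh_cf_num_rec z m :
  cosh_cf_num z (S (S m))
  = cf_a z (S (S m)) * cosh_cf_num z (S m) + cf_b z (S m) * cosh_cf_num z m.
Proof.
  cbn [cosh_cf_num prod_term cf_a cf_b]. unfold fact_double_ratio.
  rewrite !S_INR. push_RtoC. ring.
Qed.

Lemma cosh_cf_den_rec z m :
  cosh_cf_den (S (S m))
  = cf_a z (S (S m)) * cosh_cf_den (S m) + cf_b z (S m) * cosh_cf_den m.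
Proof.
  unfold cosh_cf_den. rewrite !INR_fact_double_S. cbn [cf_a cf_b].
  unfold fact_double_ratio. rewrite !S_INR. push_RtoC. ring.
Qed.

Lemma cf_convergent_cosh z n :
  cf_convergent (cf_a z) (cf_b z) n = sum_n (cosh_term z) n.
Proof.
  unfold cf_convergent, cf_num, cf_den.
  replace (cf_a z 1 * cf_a z 0 + cf_b z 0) with (cosh_cf_num z 1).
  2:{ cbn [cosh_cf_num prod_term cf_a cf_b]. unfold fact_double_ratio. simpl INR.
      push_RtoC. ring. }
  change (cf_a z 0) with (cosh_cf_num z 0).
  replace (1 : C) with (cosh_cf_den 0) at 1 by reflexivity.
  replace (cf_a z 1) with (cosh_cf_den 1) by (unfold cosh_cf_den; simpl; f_equal).
  rewrite (cf_pair_recurrence _ _ _ (cosh_cf_num_rec z)),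
          (cf_pair_recurrence _ _ _ (cosh_cf_den_rec z)); simpl fst.
  rewrite cosh_cf_num_partial_sum. unfold cosh_cf_den.
  field. apply RtoC_neq0, INR_fact_neq_0.
Qed.

Lemma cf_value_of_cosh_series z L :
  is_series (cosh_term z) L -> cf_value (cf_a z) (cf_b z) L.
Proof.
  intros H. eapply filterlim_ext; [|exact H].
  intros n. symmetry. apply cf_convergent_cosh.
Qed.

(* The [h_n(s)] above: with [s = b^2], the Taylor coefficients of [cosh(b t)]
   in the variable [sin(t)^2]. *)
Fixpoint hyp_coef (s : C) (n : nat) : C :=
  match n with
  | O => 1
  | S m => hyp_coef s m * (RtoC (4 * INR m ^ 2) + s) * RtoC (/ fact_double_ratio m)
  end.

Definition hyp_re (s : C) (n : nat) : R := Re (hyp_coef s n).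
Definition hyp_im (s : C) (n : nat) : R := Im (hyp_coef s n).

Lemma hyp_re_S s m :
  hyp_re s (S m)
  = ((hyp_re s m * (4 * INR m ^ 2 + Re s) - hyp_im s m * Im s) / fact_double_ratio m)%R.
Proof.
  unfold hyp_re, hyp_im. simpl hyp_coef.
  destruct (hyp_coef s m), s. simpl. unfold Rdiv. ring.
Qed.

Lemma hyp_im_S s m :
  hyp_im s (S m)
  = ((hyp_im s m * (4 * INR m ^ 2 + Re s) + hyp_re s m * Im s) / fact_double_ratio m)%R.
Proof.
  unfold hyp_re, hyp_im. simpl hyp_coef.
  destruct (hyp_coef s m), s. simpl. unfold Rdiv. ring.
Qed.

Lemma Cmod_hyp_coef_S_le s m :
  (Cmod s <= INR m)%R -> (Cmod (hyp_coef s (S m)) <= Cmod (hyp_coef s m))%R.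
Proof.
  intros Hm. cbn [hyp_coef]. rewrite !Cmod_mult, !Cmod_R.
  pose proof (fact_double_ratio_pos m) as Hd.
  rewrite (Rabs_pos_eq (/ fact_double_ratio m)) by (left; apply Rinv_0_lt_compat, Hd).
  assert (Hfactor : (Cmod (RtoC (4 * INR m ^ 2) + s) <= fact_double_ratio m)%R).
  { eapply Rle_trans; [apply Cmod_triangle|].
    rewrite Cmod_R, Rabs_pos_eq by nra.
    unfold fact_double_ratio. pose proof (pos_INR m). nra. }
  rewrite Rmult_assoc. rewrite <- (Rmult_1_r (Cmod (hyp_coef s m))) at 2.
  apply Rmult_le_compat_l; [apply Cmod_ge_0|].
  apply (Rmult_le_reg_r (fact_double_ratio m)); auto.
  rewrite Rmult_assoc, Rinv_l by lra. lra.
Qed.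

Lemma le_sum_f_R0_term (f : nat -> R) N k :
  (forall i, 0 <= f i)%R -> (k <= N)%nat -> (f k <= sum_f_R0 f N)%R.
Proof.
  intros Hf Hk. induction N as [|N IH].
  - replace k with 0%nat by lia. simpl. lra.
  - simpl. destruct (Nat.eq_dec k (S N)) as [->|Hne].
    + pose proof (cond_pos_sum f N Hf). lra.
    + pose proof (Hf (S N)). assert (IH' := IH ltac:(lia)). lra.
Qed.

(* The coefficients stop growing once [n >= |s|], so the first ones bound them all. *)
Lemma hyp_coef_bounded s : exists B, forall n, (Cmod (hyp_coef s n) <= B)%R.
Proof.
  destruct (INR_unbounded (Cmod s)) as [N HN].
  exists (sum_f_R0 (fun k => Cmod (hyp_coef s k)) N). intros n.
  assert (Hpos : forall k, (0 <= Cmod (hyp_coef s k))%R) by (intros; apply Cmod_ge_0).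
  induction n as [|n IH].
  - apply (le_sum_f_R0_term (fun k => Cmod (hyp_coef s k))); auto; lia.
  - destruct (Compare_dec.le_lt_dec (S n) N).
    + apply (le_sum_f_R0_term (fun k => Cmod (hyp_coef s k))); auto.
    + eapply Rle_trans; [|exact IH]. apply Cmod_hyp_coef_S_le.
      assert (INR N <= INR n)%R by (apply le_INR; lia). lra.
Qed.

Lemma CV_radius_ge1_of_bounded (a : nat -> R) (B : R) :
  (forall n, Rabs (a n) <= B)%R -> Rbar_le 1 (CV_radius a).
Proof.
  intros HB. apply (proj1 (CV_radius_bounded a)).
  exists B. intros n. now rewrite pow1, Rmult_1_r.
Qed.

Lemma CV_radius_hyp_re s : Rbar_le 1 (CV_radius (hyp_re s)).
Proof.
  destruct (hyp_coef_bounded s) as [B HB].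
  apply (CV_radius_ge1_of_bounded _ B). intros n.
  eapply Rle_trans; [|apply (HB n)].
  eapply Rle_trans; [apply Rmax_l|apply Rmax_Cmod].
Qed.

Lemma CV_radius_hyp_im s : Rbar_le 1 (CV_radius (hyp_im s)).
Proof.
  destruct (hyp_coef_bounded s) as [B HB].
  apply (CV_radius_ge1_of_bounded _ B). intros n.
  eapply Rle_trans; [|apply (HB n)].
  eapply Rle_trans; [apply Rmax_r|apply Rmax_Cmod].
Qed.

Open Scope R_scope.

Lemma is_series_PSeries (a : nat -> R) y :
  ex_pseries a y -> is_series (fun n => a n * y ^ n) (PSeries a y).
Proof. intros H. now apply is_pseries_R, PSeries_correct. Qed.

Lemma is_series_PSeries_incr_1 (a : nat -> R) y : ex_pseries a y ->
  is_series (fun n => PS_incr_1 a n * y ^ n) (y * PSeries a y).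
Proof.
  intros H. rewrite <- PSeries_incr_1.
  now apply is_series_PSeries, ex_pseries_incr_1.
Qed.

Lemma is_series_null_sum (w : nat -> R) L :
  (forall n, w n = 0) -> is_series w L -> L = 0.
Proof.
  intros Hw H.
  assert (H0 : is_series w 0).
  { pose proof (is_series_scal 0 w L H) as H0.
    unfold scal in H0; simpl in H0; unfold mult in H0; simpl in H0.
    rewrite Rmult_0_l in H0. revert H0. apply is_series_ext.
    intros n. rewrite Hw. apply Rmult_0_l. }
  apply is_series_unique in H. apply is_series_unique in H0. congruence.
Qed.

(* If [u + i v] has the coefficients of [hyp_coef (p + i q)], then [F = PSeries u]
   satisfies the real part of [4 y (1 - y) F'' + 2 (1 - 2 y) F' = s F]:
   comparing coefficients of [y^n] gives back the recurrence. *)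
Lemma PSeries_hyp_ode (u v : nat -> R) (p q y : R) :
  (forall m, u (S m) = (u m * (4 * INR m ^ 2 + p) - v m * q) / fact_double_ratio m) ->
  Rbar_lt (Rabs y) (CV_radius u) -> Rbar_lt (Rabs y) (CV_radius v) ->
  4 * y * (1 - y) * PSeries (PS_derive (PS_derive u)) y
  + 2 * (1 - 2 * y) * PSeries (PS_derive u) y
  = p * PSeries u y - q * PSeries v y.
Proof.
  intros Hu Hru Hrv.
  assert (E0 : ex_pseries u y) by now apply CV_radius_inside.
  assert (Ev : ex_pseries v y) by now apply CV_radius_inside.
  assert (E1 : ex_pseries (PS_derive u) y) by now apply ex_pseries_derive.
  assert (E2 : ex_pseries (PS_derive (PS_derive u)) y)
    by (apply ex_pseries_derive; now rewrite CV_radius_derive).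
  set (d1 := PS_derive u) in *. set (d2 := PS_derive d1) in *.
  pose proof (is_series_PSeries_incr_1 _ _ E2) as S1.
  pose proof (is_series_PSeries_incr_1 _ _ (ex_pseries_incr_1 _ _ E2)) as S2.
  rewrite PSeries_incr_1 in S2.
  pose proof (is_series_PSeries _ _ E1) as S3.
  pose proof (is_series_PSeries_incr_1 _ _ E1) as S4.
  pose proof (is_series_PSeries _ _ E0) as S5.
  pose proof (is_series_PSeries _ _ Ev) as S6.
  pose proof (is_series_plus _ _ _ _ (is_series_scal 4 _ _ S1)
      (is_series_plus _ _ _ _ (is_series_scal (-4) _ _ S2)
      (is_series_plus _ _ _ _ (is_series_scal 2 _ _ S3)
      (is_series_plus _ _ _ _ (is_series_scal (-4) _ _ S4)
      (is_series_plus _ _ _ _ (is_series_scal (-p) _ _ S5)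
                               (is_series_scal q _ _ S6)))))) as Ssum.
  apply is_series_null_sum in Ssum.
  - unfold plus, scal in Ssum; simpl in Ssum; unfold mult in Ssum; simpl in Ssum.
    nra.
  - intros n. unfold plus, scal; simpl; unfold mult; simpl.
    unfold d2, d1, PS_derive.
    destruct n as [|[|j]].
    + simpl. rewrite (Hu 0%nat). unfold zero, fact_double_ratio. simpl. field.
    + simpl. rewrite (Hu 1%nat). unfold zero, fact_double_ratio. simpl. field.
    + cbn [PS_incr_1]. rewrite (Hu (S (S j))).
      pose proof (fact_double_ratio_pos (S (S j))). unfold fact_double_ratio in *.
      rewrite !S_INR in *. pose proof (pos_INR j). field. lra.
Qed.

Lemma Rabs_sin_sqr_lt_1 t : Rabs t < 1 -> Rabs (sin t ^ 2) < 1.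
Proof.
  intros Ht. assert (0 < cos t).
  { apply cos_gt_0; pose proof PI2_1; apply Rabs_def2 in Ht; lra. }
  pose proof (sin2_cos2 t). unfold Rsqr in *.
  rewrite Rabs_pos_eq by nra. nra.
Qed.

Lemma is_derive_comp_sin_sqr (P P' : R -> R) t :
  (forall y, Rabs y < 1 -> is_derive P y (P' y)) -> Rabs t < 1 ->
  is_derive (fun t => P (sin t ^ 2)) t (P' (sin t ^ 2) * (2 * sin t * cos t)).
Proof.
  intros HP Ht.
  pose proof (is_derive_comp P (fun t => sin t ^ 2) t (P' (sin t ^ 2))
     (2 * sin t * cos t) (HP _ (Rabs_sin_sqr_lt_1 t Ht))) as H.
  unfold scal in H; simpl in H; unfold mult in H; simpl in H.
  rewrite Rmult_comm. apply H. auto_derive; auto. ring.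
Qed.

Lemma is_derive_PSeries_in_unit_disk (u : nat -> R) y :
  Rbar_le 1 (CV_radius u) -> Rabs y < 1 ->
  is_derive (PSeries u) y (PSeries (PS_derive u) y).
Proof.
  intros Hr Hy. apply is_derive_PSeries. eapply Rbar_lt_le_trans; [|exact Hr]. exact Hy.
Qed.

Definition PSeries_sin_sqr_deriv (u : nat -> R) (t : R) : R :=
  PSeries (PS_derive u) (sin t ^ 2) * (2 * sin t * cos t).

(* The substitution [y = sin(t)^2] turns the hypergeometric equation of
   [PSeries_hyp_ode] into [G'' = s G]. *)
Lemma PSeries_sin_sqr_ode (u v : nat -> R) (p q t : R) :
  (forall m, u (S m) = (u m * (4 * INR m ^ 2 + p) - v m * q) / fact_double_ratio m) ->
  Rbar_le 1 (CV_radius u) -> Rbar_le 1 (CV_radius v) -> Rabs t < 1 ->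
  is_derive (fun t => PSeries u (sin t ^ 2)) t (PSeries_sin_sqr_deriv u t) /\
  is_derive (PSeries_sin_sqr_deriv u) t
    (p * PSeries u (sin t ^ 2) - q * PSeries v (sin t ^ 2)).
Proof.
  intros Hu Hru Hrv Ht. split.
  { apply is_derive_comp_sin_sqr; auto. intros y Hy.
    now apply is_derive_PSeries_in_unit_disk. }
  assert (Hr1 : Rbar_le 1 (CV_radius (PS_derive u))) by now rewrite CV_radius_derive.
  pose proof (is_derive_comp_sin_sqr _ _ t
    (fun y Hy => is_derive_PSeries_in_unit_disk _ y Hr1 Hy) Ht) as H1.
  assert (H2 : is_derive (fun t => 2 * sin t * cos t) t (2 * (cos t ^ 2 - sin t ^ 2)))
    by (auto_derive; auto; ring).
  pose proof (is_derive_mult _ _ t _ _ H1 H2 Rmult_comm) as H3.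
  unfold mult, plus in H3. cbn beta in H3.
  assert (Hy := Rabs_sin_sqr_lt_1 t Ht).
  rewrite <- (PSeries_hyp_ode u v p q (sin t ^ 2) Hu
    (Rbar_lt_le_trans (Rabs (sin t ^ 2)) 1 _ Hy Hru)
    (Rbar_lt_le_trans (Rabs (sin t ^ 2)) 1 _ Hy Hrv)).
  refine (@eq_ind R _ (is_derive _ t) H3 _ _). unfold mult, plus; simpl.
  rewrite !Rmult_1_r.
  assert (Hc : cos t * cos t = 1 - sin t * sin t)
    by (pose proof (sin2_cos2 t); unfold Rsqr in *; lra).
  set (F2 := PSeries (PS_derive (PS_derive u)) (sin t * sin t)).
  replace (F2 * (2 * sin t * cos t) * (2 * sin t * cos t))
    with (4 * F2 * (sin t * sin t) * (cos t * cos t)) by ring.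
  rewrite Hc. ring.
Qed.

(* [K E - dE/dt] is a sum of squares plus nonnegative terms, where
   [E = x^2 + y^2 + x1^2 + y1^2] is the energy of the system below. *)
Lemma energy_growth_bound p q x y x1 y1 :
  2 * (x * x1 + y * y1 + x1 * (p * x - q * y) + y1 * (p * y + q * x))
  <= (2 + p ^ 2 + q ^ 2) * (x ^ 2 + y ^ 2 + x1 ^ 2 + y1 ^ 2).
Proof.
  pose proof (pow2_ge_0 (x - x1)). pose proof (pow2_ge_0 (y - y1)).
  pose proof (pow2_ge_0 (x1 - (p * x - q * y))).
  pose proof (pow2_ge_0 (y1 - (p * y + q * x))).
  pose proof (pow2_ge_0 x). pose proof (pow2_ge_0 y).
  pose proof (Rmult_le_pos _ _ (Rplus_le_le_0_compat _ _ (pow2_ge_0 p) (pow2_ge_0 q))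
    (Rplus_le_le_0_compat _ _ (pow2_ge_0 x1) (pow2_ge_0 y1))).
  nra.
Qed.

(* Uniqueness for the real form of [w'' = (p + i q) w]: the energy [E] satisfies
   [E' <= K E], so [E(t) e^(-K t)] is nonincreasing and vanishes at [0]. *)
Lemma linear_ode_system_zero (p q : R) (x y x1 y1 : R -> R) :
  (forall t, Rabs t < 1 ->
     is_derive x t (x1 t) /\ is_derive y t (y1 t) /\
     is_derive x1 t (p * x t - q * y t) /\ is_derive y1 t (p * y t + q * x t)) ->
  x 0 = 0 -> y 0 = 0 -> x1 0 = 0 -> y1 0 = 0 ->
  forall t, 0 <= t < 1 -> x t = 0 /\ y t = 0.
Proof.
  intros HD Hx Hy Hx1 Hy1 t Ht.
  set (K := 2 + p ^ 2 + q ^ 2).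
  set (E := fun s => x s ^ 2 + y s ^ 2 + x1 s ^ 2 + y1 s ^ 2).
  set (phi := fun s => E s * exp (- K * s)).
  set (dphi := fun s =>
    (2 * (x s * x1 s + y s * y1 s + x1 s * (p * x s - q * y s)
          + y1 s * (p * y s + q * x s)) - K * E s) * exp (- K * s)).
  assert (Hd : forall s, Rabs s < 1 -> is_derive phi s (dphi s)).
  { intros s Hs. destruct (HD s Hs) as (Dx & Dy & Dx1 & Dy1).
    unfold phi, dphi, E. auto_derive.
    - repeat split; eexists; eauto.
    - change (fun z => x z) with x; change (fun z => y z) with y;
      change (fun z => x1 z) with x1; change (fun z => y1 z) with y1.
      rewrite (is_derive_unique _ _ _ Dx), (is_derive_unique _ _ _ Dy),
        (is_derive_unique _ _ _ Dx1), (is_derive_unique _ _ _ Dy1).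
      ring. }
  assert (Hin : forall s, Rmin 0 t <= s <= Rmax 0 t -> Rabs s < 1).
  { intros s Hs. rewrite Rmin_left, Rmax_right in Hs by lra. apply Rabs_def1; lra. }
  destruct (MVT_gen phi 0 t dphi) as (c & Hc & Hmv).
  - intros s Hs. apply Hd, Hin. lra.
  - intros s Hs. apply continuity_pt_filterlim.
    apply (ex_derive_continuous (K := R_AbsRing) (V := R_NormedModule) phi).
    eexists. now apply Hd, Hin.
  - assert (Hneg : dphi c <= 0).
    { apply Rmult_le_0_r; [|left; apply exp_pos].
      pose proof (energy_growth_bound p q (x c) (y c) (x1 c) (y1 c)).
      unfold E, K. lra. }
    assert (Hphi0 : phi 0 = 0) by (unfold phi, E; rewrite Hx, Hy, Hx1, Hy1; ring).
    assert (Hphit : phi t <= 0) by (rewrite Hphi0 in Hmv; nra).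
    unfold phi in Hphit. pose proof (exp_pos (- K * t)).
    assert (E t <= 0) by nra.
    unfold E in *. split; nra.
Qed.

Definition cosh_re (b1 b2 t : R) : R :=
  (exp (b1 * t) + exp (- b1 * t)) / 2 * cos (b2 * t).
Definition cosh_im (b1 b2 t : R) : R :=
  (exp (b1 * t) - exp (- b1 * t)) / 2 * sin (b2 * t).
Definition cosh_re' (b1 b2 t : R) : R :=
  b1 * (exp (b1 * t) - exp (- b1 * t)) / 2 * cos (b2 * t)
  - b2 * (exp (b1 * t) + exp (- b1 * t)) / 2 * sin (b2 * t).
Definition cosh_im' (b1 b2 t : R) : R :=
  b1 * (exp (b1 * t) + exp (- b1 * t)) / 2 * sin (b2 * t)
  + b2 * (exp (b1 * t) - exp (- b1 * t)) / 2 * cos (b2 * t).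

Lemma Ccosh_components (t b1 b2 : R) :
  Ccosh (RtoC t * (b1, b2)) = (cosh_re b1 b2 t, cosh_im b1 b2 t).
Proof.
  unfold Ccosh, Cexp, cosh_re, cosh_im.
  rewrite re_opp, im_opp.
  replace (Re (RtoC t * (b1, b2))) with (b1 * t) by (simpl; ring).
  replace (Im (RtoC t * (b1, b2))) with (b2 * t) by (simpl; ring).
  replace (- (b1 * t)) with (- b1 * t) by ring.
  rewrite cos_neg, sin_neg.
  unfold Copp, Cplus, Cdiv, Cinv, Cmult. simpl. f_equal; field.
Qed.

Lemma cosh_components_ode b1 b2 t :
  is_derive (cosh_re b1 b2) t (cosh_re' b1 b2 t) /\
  is_derive (cosh_im b1 b2) t (cosh_im' b1 b2 t) /\
  is_derive (cosh_re' b1 b2) t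
    ((b1 ^ 2 - b2 ^ 2) * cosh_re b1 b2 t - 2 * b1 * b2 * cosh_im b1 b2 t) /\
  is_derive (cosh_im' b1 b2) t
    ((b1 ^ 2 - b2 ^ 2) * cosh_im b1 b2 t + 2 * b1 * b2 * cosh_re b1 b2 t).
Proof.
  unfold cosh_re, cosh_im, cosh_re', cosh_im'.
  split; [|split; [|split]]; auto_derive; auto; field.
Qed.

Lemma PSeries_hyp_sin_sqr (b1 b2 t : R) : 0 <= t < 1 ->
  PSeries (hyp_re ((b1, b2) ^ 2)) (sin t ^ 2) = cosh_re b1 b2 t /\
  PSeries (hyp_im ((b1, b2) ^ 2)) (sin t ^ 2) = cosh_im b1 b2 t.
Proof.
  intros Ht. set (s := ((b1, b2) ^ 2)%C).
  assert (Hp : Re s = b1 ^ 2 - b2 ^ 2) by (simpl; ring).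
  assert (Hq : Im s = 2 * b1 * b2) by (simpl; ring).
  assert (Him : forall m, hyp_im s (S m)
    = (hyp_im s m * (4 * INR m ^ 2 + Re s) - hyp_re s m * (- Im s)) / fact_double_ratio m).
  { intros m. rewrite hyp_im_S. f_equal. ring. }
  assert (Hzero : forall f, PSeries f (sin 0 ^ 2) = f 0%nat).
  { intros f. rewrite sin_0, pow_i by lia. apply PSeries_0. }
  enough (H : forall t, 0 <= t < 1 ->
      PSeries (hyp_re s) (sin t ^ 2) - cosh_re b1 b2 t = 0 /\
      PSeries (hyp_im s) (sin t ^ 2) - cosh_im b1 b2 t = 0)
    by (destruct (H t Ht); split; lra).
  apply (linear_ode_system_zero (Re s) (Im s) _ _
    (fun t => PSeries_sin_sqr_deriv (hyp_re s) t - cosh_re' b1 b2 t)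
    (fun t => PSeries_sin_sqr_deriv (hyp_im s) t - cosh_im' b1 b2 t)).
  - intros t0 Ht0.
    destruct (PSeries_sin_sqr_ode _ _ _ _ t0 (hyp_re_S s)
      (CV_radius_hyp_re s) (CV_radius_hyp_im s) Ht0) as [Da Db].
    destruct (PSeries_sin_sqr_ode _ _ _ _ t0 Him
      (CV_radius_hyp_im s) (CV_radius_hyp_re s) Ht0) as [Dc Dd].
    destruct (cosh_components_ode b1 b2 t0) as (D1 & D2 & D3 & D4).
    rewrite <- Hp, <- Hq in D3, D4.
    split; [|split; [|split]].
    + exact (is_derive_minus _ _ _ _ _ Da D1).
    + exact (is_derive_minus _ _ _ _ _ Dc D2).
    + refine (@eq_ind R _ (is_derive _ t0) (is_derive_minus _ _ _ _ _ Db D3) _ _).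
      unfold minus, plus, opp; simpl. ring.
    + refine (@eq_ind R _ (is_derive _ t0) (is_derive_minus _ _ _ _ _ Dd D4) _ _).
      unfold minus, plus, opp; simpl. ring.
  - cbv beta. rewrite Hzero. unfold cosh_re, hyp_re.
    rewrite !Rmult_0_r, exp_0, cos_0. simpl. field.
  - cbv beta. rewrite Hzero. unfold cosh_im, hyp_im.
    rewrite !Rmult_0_r, sin_0. simpl. ring.
  - unfold PSeries_sin_sqr_deriv, cosh_re'. rewrite !Rmult_0_r, sin_0, exp_0. field.
  - unfold PSeries_sin_sqr_deriv, cosh_im'. rewrite !Rmult_0_r, sin_0, exp_0. field.
Qed.

Open Scope C_scope.

Lemma sum_n_C (f : nat -> C) n :
  sum_n f n = (sum_n (fun k => Re (f k)) n, sum_n (fun k => Im (f k)) n).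
Proof.
  induction n as [|n IH].
  - rewrite !sum_O. now destruct (f 0%nat).
  - rewrite !sum_Sn, IH. now destruct (f (S n)).
Qed.

Lemma is_series_C (f : nat -> C) (a b : R) :
  is_series (fun n => Re (f n)) a -> is_series (fun n => Im (f n)) b ->
  is_series f (a, b).
Proof.
  intros Ha Hb. apply filterlim_locally. intros eps.
  generalize (filter_and _ _ (proj1 (filterlim_locally _ _) Ha eps)
                             (proj1 (filterlim_locally _ _) Hb eps)).
  apply filter_imp. intros n [H1 H2]. rewrite sum_n_C. now split.
Qed.

Lemma is_series_hyp_coef_sin_sqr (b : C) (t : R) : (0 <= t < 1)%R ->
  is_series (fun n => hyp_coef (b ^ 2) n * RtoC ((sin t ^ 2) ^ n))
            (Ccosh (RtoC t * b)).
Proof.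
  intros Ht. destruct b as [b1 b2].
  rewrite Ccosh_components.
  destruct (PSeries_hyp_sin_sqr b1 b2 t Ht) as [<- <-].
  assert (Hy : Rbar_lt (Rabs (sin t ^ 2)) 1)
    by (apply Rabs_sin_sqr_lt_1, Rabs_def1; lra).
  apply is_series_C.
  - eapply is_series_ext; [|apply is_series_PSeries, CV_radius_inside].
    + intros n. unfold hyp_re. destruct (hyp_coef _ n). simpl. ring.
    + exact (Rbar_lt_le_trans _ _ _ Hy (CV_radius_hyp_re _)).
  - eapply is_series_ext; [|apply is_series_PSeries, CV_radius_inside].
    + intros n. unfold hyp_im. destruct (hyp_coef _ n). simpl. ring.
    + exact (Rbar_lt_le_trans _ _ _ Hy (CV_radius_hyp_im _)).
Qed.

Lemma cosh_term_hyp_coef z n :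
  cosh_term z n = hyp_coef ((6 * z) ^ 2) n * RtoC ((sin (PI / 6) ^ 2) ^ n).
Proof.
  rewrite sin_PI6. unfold cosh_term.
  induction n as [|n IH].
  - simpl. field.
  - rewrite INR_fact_double_S. cbn [prod_term hyp_coef].
    pose proof (fact_double_ratio_pos n) as Hd.
    pose proof (RtoC_neq0 _ (INR_fact_neq_0 (2 * n))) as Hf.
    assert (Hprod : prod_term z n = hyp_coef ((6 * z) ^ 2) n
                      * RtoC (((1 / 2) ^ 2) ^ n) * RtoC (INR (fact (2 * n))))
      by (rewrite <- IH; field; exact Hf).
    rewrite Hprod, RtoC_mult, RtoC_inv, !RtoC_pow, RtoC_div by lra.
    push_RtoC. simpl. field. split; [apply RtoC_neq0; lra | exact Hf].
Qed.

Theorem mainTheorem18 (z : C) :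
  is_series (fun n : nat => prod_term z n / RtoC (INR (fact (2 * n))))
            (Ccosh (RtoC PI * z))
  /\ cf_value (cf_a z) (cf_b z) (Ccosh (RtoC PI * z)).
Proof.
  assert (Hseries : is_series (cosh_term z) (Ccosh (RtoC PI * z))).
  { replace (RtoC PI * z) with (RtoC (PI / 6) * (6 * z))
      by (rewrite RtoC_div by lra; field; apply RtoC_neq0; lra).
    eapply is_series_ext; [intros n; symmetry; apply cosh_term_hyp_coef|].
    apply is_series_hyp_coef_sin_sqr.
    pose proof PI_RGT_0. pose proof PI_4. lra. }
  split; [exact Hseries | now apply cf_value_of_cosh_series].
Qed.
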